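(* Let $p\geq 1$ and $q\geq 2$ be integers, and let $\Delta_{L_{p,q}}(x,t)$ be the two-variable Alexander polynomial of the link $L_{p,q}$, where $x$ corresponds to the axis $A$ and $t$ to $\hat B_{p,q}$. Then $\Delta_{L_{p,2}}(x,t)=1+xt^{2p-1}$, and for $q\geq3$, $$\Delta_{L_{p,q}}(x,t)=1+x^{q-1}t^{2p+q-3}+xt^2\left(\frac{1+t^{2p-3}}{1+t}\right)\left(\frac{1-(xt)^{q-2}}{1-xt}\right).$$
   Context: In the $q$-strand braid group with generators $\sigma_1,\dots,\sigma_{q-1}$ ($\sigma_i$ is the crossing of the $(i+1)$st strand over the $i$th), $B_{p,q}=\sigma_{q-1}\sigma_{q-2}\cdots\sigma_2\sigma_1^{2p-1}$; $\hat B_{p,q}$ is its closure, $A$ its braid axis, and $L_{p,q}=A\cup\hat B_{p,q}\subset S^3$. The Alexander polynomial is normalized via Morton's formula $\Delta_{L_{p,q}}(x,t)=\det\big(I-x\,C_{q-1}C_{q-2}\cdots C_2C_1^{2p-1}\big)$, where $C_i$ is the $(q-1)\times(q-1)$ matrix which equals the identity except in row $i$, whose entries in columns $i-1,i,i+1$ are $t,-t,1$ respectively (truncated to the two existing entries when $i=1$ or $i=q-1$). *)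

From HB Require Import structures.
From mathcomp Require Import all_boot all_order all_algebra.
Set Implicit Arguments. Unset Strict Implicit. Unset Printing Implicit Defensive.
Import Order.TTheory GRing.Theory Num.Theory.
Local Open Scope ring_scope.

(* Morton's matrix C_i (1-based i, 1 <= i <= n = q-1), size n x n:
   identity except row i, whose entries in columns i-1, i, i+1 are t, -t, 1
   (columns outside 1..n simply do not exist, giving the truncation). *)
Definition Cmat (R : comRingType) (n i : nat) (t : R) : 'M[R]_n :=
  \matrix_(r < n, c < n)
    if r.+1 == i then
      (if c.+1 == i.-1 then t
       else if c.+1 == i then - t
       else if c.+1 == i.+1 then 1 else 0)
    else (r == c)%:R.

Definition morton_prod (R : comRingType) (p q : nat) (t : R) : 'M[R]_(q.-1) :=
  foldr (fun i A => Cmat q.-1 i t *m A)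
        (iter (2 * p - 1) (fun A => Cmat q.-1 1 t *m A) 1%:M)
        (rev (iota 2 (q - 2))).

Definition alexLpq (R : comRingType) (p q : nat) (x t : R) : R :=
  \det (1%:M - x *: morton_prod p q t).

From HB Require Import structures.
From mathcomp Require Import all_boot all_order all_algebra.
From mathcomp Require Import ring zify.
Set Implicit Arguments. Unset Strict Implicit. Unset Printing Implicit Defensive.
Import Order.TTheory GRing.Theory Num.Theory.
Local Open Scope ring_scope.

(* Left multiplication by C_i only changes row i, which becomes
   t (row i-1) - t (row i) + (row i+1).  Hence, with rows indexed from 0, the
   Morton product M has row 0 equal to ((-t)^(2p-1), sum_(j<2p-1) (-t)^j, 0, ...)
   and row i >= 1 equal to t (row i-1 of M) - t e_i + e_(i+1).  Multiplying
   I - xM on the left by the unipotent matrix I - t (subdiagonal shift) removes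
   the dependence on row i-1 and leaves a tridiagonal matrix with diagonal
   1 + xt, subdiagonal -t and superdiagonal -x below row 0.  Its leading minors
   satisfy the continuant recurrence D_(n+2) = (1 + xt) D_(n+1) - xt D_n, solved
   in closed form; two geometric sums then produce the quotients of the
   statement. *)

Lemma sum_ord_kronecker (R : pzSemiRingType) (n m : nat) (g : nat -> R) :
  \sum_(k < n) ((k : nat) == m)%:R * g k = if (m < n)%N then g m else 0.
Proof.
rewrite -(big_ord1_eq +%R) [RHS]big_mkcond; apply: eq_bigr => k _.
by case: eqP; rewrite ?mul1r ?mul0r.
Qed.

Section MortonMatrixRows.
Variables (R : comNzRingType) (n : nat) (t : R).

Lemma Cmat_row (i k : 'I_n) :
  Cmat n i.+1 t i k = (if (0 < i)%N then t * ((k : nat) == i.-1)%:R else 0)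
     - t * ((k : nat) == i)%:R + ((k : nat) == i.+1)%:R.
Proof.
rewrite mxE eqxx /=.
case: i => [[|i] Hi] /=; case: k => [k Hk] /=;
  repeat (case: eqP => ?); try lia; simpl; ring.
Qed.

Lemma Cmat_row_id (m : nat) (i k : 'I_n) :
  i.+1 != m -> Cmat n m t i k = ((k : nat) == i)%:R.
Proof. by rewrite mxE => /negbTE ->; rewrite eq_sym. Qed.

Lemma mulCmx_row (f : nat -> nat -> R) (i c : 'I_n) :
  (Cmat n i.+1 t *m \matrix_(a < n, b < n) f a b) i c =
  (if (0 < i)%N then t * f i.-1 c else 0) - t * f i c
  + (if (i.+1 < n)%N then f i.+1 c else 0).
Proof.
rewrite mxE.
have split_entry (k : 'I_n) : Cmat n i.+1 t i k * (\matrix_(a < n, b < n) f a b) k c =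
  (if (0 < i)%N then t else 0) * (((k : nat) == i.-1)%:R * f k c)
  - t * (((k : nat) == i)%:R * f k c) + ((k : nat) == i.+1)%:R * f k c.
  by rewrite Cmat_row mxE; case: ifP => _; ring.
rewrite (eq_bigr _ (fun k _ => split_entry k)) big_split sumrB /= -!mulr_sumr.
rewrite !(sum_ord_kronecker _ _ (fun k => f k c)) ltn_ord.
have -> : (i.-1 < n)%N by apply: leq_ltn_trans (leq_pred _) (ltn_ord i).
by case: ifP => _; rewrite ?mul0r ?add0r ?sub0r.
Qed.

Lemma mulCmx_row_id (m : nat) (f : nat -> nat -> R) (i c : 'I_n) :
  i.+1 != m -> (Cmat n m t *m \matrix_(a < n, b < n) f a b) i c = f i c.
Proof.
move=> im; rewrite mxE.
under eq_bigr => k _ do rewrite Cmat_row_id // mxE.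
by rewrite (sum_ord_kronecker _ _ (fun k => f k c)) ltn_ord.
Qed.

End MortonMatrixRows.

Section MortonProduct.
Variables (R : comNzRingType) (t : R).

Definition row0_C1_pow (k c : nat) : R :=
  if c == 0%N then (- t) ^+ k else if c == 1%N then \sum_(j < k) (- t) ^+ j else 0.

(* Entry (r, c), indexed from 0, of C_(j+1) ... C_2 A, where A is the identity
   matrix with row 0 replaced by a. *)
Fixpoint morton_rows (a : nat -> R) (j r c : nat) : R :=
  match r with
  | 0 => a c
  | r'.+1 => if (r' < j)%N then t * morton_rows a j r' c - t * (r'.+1 == c)%:R + (r'.+2 == c)%:R
             else (r'.+1 == c)%:R
  end.

Lemma morton_rowsS (a : nat -> R) (j r c : nat) :
  r != j.+1 -> morton_rows a j r c = morton_rows a j.+1 r c.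
Proof.
case: (leqP r j) => [+ _|lt_j_r ne_r].
  elim: r => [|r IH] //= le_r_j.
  by rewrite le_r_j ltnS (ltnW le_r_j) IH // ltnW.
case: r lt_j_r ne_r => [|r] //= lt_j_r ne_r.
have -> : (r < j)%N = false by lia.
by have -> : (r < j.+1)%N = false by lia.
Qed.

Lemma iter_mulC1mx (n k : nat) :
  iter k (fun A => Cmat n 1 t *m A) 1%:M = \matrix_(r < n, c < n) morton_rows (row0_C1_pow k) 0 r c.
Proof.
elim: k => [|k IH].
  apply/matrixP => i c; rewrite !mxE /=.
  case: i => [[|i] Hi]; case: c => [[|c] Hc] //=; rewrite /row0_C1_pow /= ?big_ord0 //.
  by case: c Hc.
rewrite iterS IH; apply/matrixP => i c.
have [i0|i0] := eqVneq (i : nat) 0%N; last first.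
  by rewrite mulCmx_row_id ?eqSS // mxE; case: (nat_of_ord i) i0.
have -> : Cmat n 1 t = Cmat n i.+1 t by rewrite i0.
rewrite mulCmx_row !mxE i0 /= /row0_C1_pow.
case: c => [[|[|c]] Hc] /=.
- by rewrite exprS; case: ifP => _; ring.
- rewrite Hc big_ord_recl /= expr0.
  under [X in _ = 1 + X]eq_bigr => j _ do rewrite exprSr /bump /=.
  by rewrite -mulr_suml; ring.
- by case: ifP => _; ring.
Qed.

Lemma foldr_mulCmx (n : nat) (a : nat -> R) (m : nat) : (m < n)%N ->
  foldr (fun i A => Cmat n i t *m A) (\matrix_(r < n, c < n) morton_rows a 0 r c)
        (rev (iota 2 m))
  = \matrix_(r < n, c < n) morton_rows a m r c.
Proof.
elim: m => [|m IH] lt_m_n //.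
rewrite -[m.+1]addn1 iotaD rev_cat /= addn1 IH; last exact: ltnW.
apply/matrixP => i c.
have [im|im] := eqVneq (i : nat) m.+1; last first.
  by rewrite mulCmx_row_id ?add2n ?eqSS // !mxE morton_rowsS.
have -> : Cmat n (2 + m) t = Cmat n i.+1 t by rewrite im.
rewrite mulCmx_row !mxE im /= ltnn ltnSn -morton_rowsS; last by rewrite neq_ltn ltnSn.
case: ifP => [_|m2_n]; first by rewrite /= ltnNge leqnSn.
have -> : (m.+2 == c) = false.
  by apply/negbTE; rewrite neq_ltn (leq_trans (ltn_ord c)) ?orbT // leqNgt m2_n.
by rewrite addr0.
Qed.

Lemma morton_prod_rows (p q : nat) : (2 <= q)%N ->
  morton_prod p q t
  = \matrix_(r < q.-1, c < q.-1) morton_rows (row0_C1_pow (2 * p - 1)) (q - 2) r c.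
Proof.
move=> q2; rewrite /morton_prod iter_mulC1mx foldr_mulCmx //.
by case: q q2 => [|[|q]] // _; rewrite subn2 /= ltnSn.
Qed.

End MortonProduct.

Definition lower_bidiag_mx (R : pzRingType) (n : nat) (t : R) : 'M[R]_n :=
  \matrix_(i < n, j < n) (((i : nat) == j)%:R - t * ((i : nat) == j.+1)%:R).

Lemma det_lower_bidiag_mx (R : comNzRingType) (n : nat) (t : R) :
  \det (lower_bidiag_mx n t) = 1.
Proof.
rewrite det_trig.
  by apply: big1 => i _; rewrite mxE eqxx (ltn_eqF (ltnSn _)) mulr0 subr0.
apply/is_trig_mxP => i j lt_i_j; rewrite mxE (ltn_eqF lt_i_j).
have -> : ((i : nat) == j.+1) = false by lia.
by rewrite mulr0 subr0.
Qed.

Lemma mul_lower_bidiag_mx (R : comNzRingType) (n : nat) (t : R)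
    (f : nat -> nat -> R) (i c : 'I_n) :
  (lower_bidiag_mx n t *m \matrix_(a < n, b < n) f a b) i c
  = f i c - (if (0 < i)%N then t * f i.-1 c else 0).
Proof.
rewrite mxE.
have split_entry (k : 'I_n) : lower_bidiag_mx n t i k * (\matrix_(a < n, b < n) f a b) k c
  = ((k : nat) == i)%:R * f k c
    - (if (0 < i)%N then t else 0) * (((k : nat) == i.-1)%:R * f k c).
  rewrite !mxE eq_sym; case: i => [[|i] ?] /=; first by rewrite mulr0 mul0r !subr0.
  by rewrite eqSS [(k : nat) == i]eq_sym; ring.
rewrite (eq_bigr _ (fun k _ => split_entry k)) sumrB -mulr_sumr.
rewrite !(sum_ord_kronecker _ _ (fun k => f k c)) ltn_ord.
have -> : (i.-1 < n)%N by apply: leq_ltn_trans (leq_pred _) (ltn_ord i).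
by case: ifP; rewrite ?mul0r.
Qed.

Definition alex_tridiag (R : comNzRingType) (x t : R) (k i c : nat) : R :=
  if i == 0%N then (c == 0%N)%:R - x * row0_C1_pow t k c
  else (i == c)%:R * (1 + x * t) - t * (i == c.+1)%:R - x * (i.+1 == c)%:R.

Lemma alexLpq_tridiag (R : comNzRingType) (p q : nat) (x t : R) : (2 <= q)%N ->
  alexLpq p q x t
  = \det (\matrix_(i < q.-1, j < q.-1) alex_tridiag x t (2 * p - 1) i j).
Proof.
move=> q2; rewrite /alexLpq morton_prod_rows //.
set f := morton_rows _ _ _.
pose g r c := (r == c)%:R - x * f r c.
have -> : 1%:M - x *: \matrix_(r < q.-1, c < q.-1) f r c
    = \matrix_(r < q.-1, c < q.-1) g r c.
  by apply/matrixP => r c; rewrite !mxE.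
rewrite -[LHS]mul1r -(det_lower_bidiag_mx q.-1 t) -det_mulmx; congr (\det _).
apply/matrixP => i c.
rewrite mul_lower_bidiag_mx mxE /g /f /alex_tridiag.
case: i => [[|i] lt_i_q] /=; first by rewrite subr0 eq_sym.
have -> : (i < q - 2)%N by lia.
rewrite eqSS; ring.
Qed.

Lemma cofactor_mx_max (R : comNzRingType) (m : nat) (g : nat -> nat -> R) :
  cofactor (\matrix_(i < m.+1, j < m.+1) g i j) ord_max ord_max
  = \det (\matrix_(i < m, j < m) g i j).
Proof.
rewrite /cofactor -signr_odd addnn odd_double expr0 mul1r.
by congr (\det _); apply/matrixP => i j; rewrite !mxE !lift_max.
Qed.

Lemma det_mx_continuant_step (R : comNzRingType) (f : nat -> nat -> R) (k : nat) :
  (forall j, (j < k)%N -> f k.+1 j = 0) -> (forall i, (i < k)%N -> f i k.+1 = 0) ->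
  \det (\matrix_(i < k.+2, j < k.+2) f i j)
  = f k.+1 k.+1 * \det (\matrix_(i < k.+1, j < k.+1) f i j)
    - f k.+1 k * f k k.+1 * \det (\matrix_(i < k, j < k) f i j).
Proof.
move=> row_band col_band.
rewrite (expand_det_row _ ord_max) big_ord_recr /= big_ord_recr /=.
rewrite big1 ?add0r; last by move=> j _; rewrite mxE /= row_band ?mul0r.
rewrite !mxE /= cofactor_mx_max /cofactor /= -signr_odd addSn addnn /= odd_double /= expr1.
pose h i j := f i (if (j < k)%N then j else k.+1).
have -> : row' ord_max (col' (widen_ord (leqnSn k.+1) ord_max)
     (\matrix_(i < k.+2, j < k.+2) f i j)) = \matrix_(i < k.+1, j < k.+1) h i j.
  apply/matrixP => i j; rewrite !mxE lift_max /h /= /bump /=.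
  case: ltnP => [_|le_k_j]; first by rewrite add0n.
  by have -> : (j : nat) = k by apply/eqP; rewrite eqn_leq le_k_j -ltnS ltn_ord.
rewrite (expand_det_col _ ord_max) big_ord_recr big1 ?add0r; last first.
  by move=> i _; rewrite mxE /h /= ltnn col_band ?mul0r.
rewrite mxE cofactor_mx_max /h /= ltnn.
have -> : \matrix_(i < k, j < k) f i (if (j < k)%N then (j : nat) else k.+1)
    = \matrix_(i < k, j < k) f i j.
  by apply/matrixP => i j; rewrite !mxE ltn_ord.
ring.
Qed.

Lemma eq_linear_rec2 (R : pzSemiRingType) (a b : R) (u v : nat -> R) :
  (forall n, u n.+2 = a * u n.+1 + b * u n) ->
  (forall n, v n.+2 = a * v n.+1 + b * v n) ->
  u 0%N = v 0%N -> u 1%N = v 1%N -> u =1 v.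
Proof.
move=> u_rec v_rec u0 u1.
suff uv n : u n = v n /\ u n.+1 = v n.+1 by move=> n; case: (uv n).
elim: n => [|n [un un1]] //; split=> //.
by rewrite u_rec v_rec un un1.
Qed.

Section AlexTridiag.
Variables (R : comNzRingType) (x t : R) (k : nat).

Lemma alex_tridiag_band (i c : nat) :
  (i.+1 < c)%N || (c.+1 < i)%N -> alex_tridiag x t k i c = 0.
Proof.
rewrite /alex_tridiag /row0_C1_pow; case: i => [|i] band /=.
  by case: c band => [|[|c]] //= _; rewrite mulr0 subr0.
have -> : (i.+1 == c) = false by lia.
have -> : (i.+1 == c.+1) = false by lia.
have -> : (i.+2 == c) = false by lia.
by rewrite mul0r !mulr0 !subr0.
Qed.

Lemma alex_tridiag_diag (i : nat) : alex_tridiag x t k i.+1 i.+1 = 1 + x * t.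
Proof. by rewrite /alex_tridiag /= eqxx; do 2 case: eqP => [?|_]; try lia; rewrite /=; ring. Qed.

Lemma alex_tridiag_subdiag (i : nat) : alex_tridiag x t k i.+1 i = - t.
Proof. by rewrite /alex_tridiag /= eqxx; do 2 case: eqP => [?|_]; try lia; rewrite /=; ring. Qed.

Lemma alex_tridiag_superdiag (i : nat) : alex_tridiag x t k i.+1 i.+2 = - x.
Proof. by rewrite /alex_tridiag /= eqxx; do 2 case: eqP => [?|_]; try lia; rewrite /=; ring. Qed.

End AlexTridiag.

Lemma det_alex_tridiag (R : comNzRingType) (x t : R) (k n : nat) :
  \det (\matrix_(i < n.+1, j < n.+1) alex_tridiag x t k.+1 i j)
  = 1 - x ^+ n.+1 * t ^+ n * (- t) ^+ k.+1
    + x * t * (1 - \sum_(j < k) (- t) ^+ j) * \sum_(j < n) (x * t) ^+ j.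
Proof.
pose D n := \det (\matrix_(i < n.+1, j < n.+1) alex_tridiag x t k.+1 i j).
pose F n := 1 - x ^+ n.+1 * t ^+ n * (- t) ^+ k.+1
    + x * t * (1 - \sum_(j < k) (- t) ^+ j) * \sum_(j < n) (x * t) ^+ j.
suff /(_ n) : D =1 F by [].
apply: (@eq_linear_rec2 _ (1 + x * t) (- (x * t))) => [m|m||].
- rewrite /D det_mx_continuant_step; last 2 first.
  + by move=> j lt_j_m; apply: alex_tridiag_band; apply/orP; right; rewrite !ltnS.
  + by move=> i lt_i_m; apply: alex_tridiag_band; apply/orP; left; rewrite !ltnS.
  by rewrite alex_tridiag_diag alex_tridiag_subdiag alex_tridiag_superdiag; ring.
- by rewrite /F !big_ord_recr /= !exprS; ring.
- by rewrite /D /F det_mx11 mxE big_ord0 /alex_tridiag /row0_C1_pow /=; ring.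
- rewrite /D /F det_mx_continuant_step // det_mx00 det_mx11 !mxE.
  rewrite alex_tridiag_diag alex_tridiag_subdiag /alex_tridiag /row0_C1_pow /=.
  by rewrite !big_ord_recr big_ord0 /= exprSr; ring.
Qed.

Lemma sum_expr_mul1B (R : comPzRingType) (u : R) (n : nat) :
  (\sum_(j < n) u ^+ j) * (1 - u) = 1 - u ^+ n.
Proof. by rewrite -[RHS]opprB subrX1 mulrC -mulNr opprB. Qed.

Lemma exprN_odd (R : pzRingType) (u : R) (n : nat) :
  (- u) ^+ (2 * n).+1 = - u ^+ (2 * n).+1.
Proof. by rewrite !exprS !exprM sqrrN mulNr. Qed.

Lemma exprN_even (R : pzRingType) (u : R) (n : nat) : (- u) ^+ (2 * n) = u ^+ (2 * n).
Proof. by rewrite !exprM sqrrN. Qed.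

Lemma alternating_sum_ratio (F : fieldType) (t : F) (p : nat) :
  t != 0 -> 1 + t != 0 ->
  t ^+ 2 * ((1 + t ^ (2 * (p.+1 : int) - 3)) / (1 + t))
  = t * (1 - \sum_(j < 2 * p) (- t) ^+ j).
Proof.
move=> t0 t1; set T := t ^ _; set s := \sum_(j < 2 * p) _.
have tT : t * T = t ^+ (2 * p).
  rewrite /T -{1}(expr1z t) -expfzDr //.
  by have -> : (1 + (2 * (p.+1 : int) - 3) = (2 * p)%N :> int)%R by lia.
have s1t : s * (1 + t) = 1 - t ^+ (2 * p).
  by rewrite -exprN_even -sum_expr_mul1B opprK.
apply: (mulIf t1); rewrite mulrA divfK //.
have -> : t ^+ 2 * (1 + T) = t ^+ 2 + t * (t * T) by ring.
have -> : t * (1 - s) * (1 + t) = t * (1 + t) - t * (s * (1 + t)) by ring.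
by rewrite tT s1t; ring.
Qed.

Theorem lemma3p1 (p q : nat) (hp : (1 <= p)%N) (hq : (2 <= q)%N) :
  (q = 2%N -> forall (F : fieldType) (x t : F),
      alexLpq p q x t = 1 + x * t ^+ (2 * p - 1)) /\
  ((3 <= q)%N -> forall (F : fieldType) (x t : F),
      t != 0 -> 1 + t != 0 -> 1 - x * t != 0 ->
      alexLpq p q x t =
        1 + x ^+ (q - 1) * t ^+ (2 * p + q - 3)
        + x * t ^+ 2 * ((1 + t ^ (2 * (p : int) - 3)) / (1 + t))
                     * ((1 - (x * t) ^+ (q - 2)) / (1 - x * t))).
Proof.
case: p hp => [|p] // _.
have odd_exp : (2 * p.+1 - 1 = (2 * p).+1)%N by lia.
split=> [-> F x t | q3 F x t t0 t1 xt1].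
  by rewrite alexLpq_tridiag // odd_exp (det_alex_tridiag _ _ _ 0) big_ord0 exprN_odd; ring.
case: q hq q3 => [|[|[|q]]] // _ _.
rewrite alexLpq_tridiag // odd_exp (det_alex_tridiag _ _ _ q.+1) exprN_odd.
have -> : (q.+3 - 1 = q.+2)%N by lia.
have -> : (q.+3 - 2 = q.+1)%N by lia.
have -> : (2 * p.+1 + q.+3 - 3 = (2 * p).+1 + q.+1)%N by lia.
have geom_xt : \sum_(j < q.+1) (x * t) ^+ j = (1 - (x * t) ^+ q.+1) / (1 - x * t).
  by rewrite -sum_expr_mul1B mulfK.
by rewrite geom_xt exprD -(mulrA x (t ^+ 2)) alternating_sum_ratio //; ring.
Qed.
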